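(* Let $L$ be an oriented link in $S^3$ equipped with its $0$-framing, and let $p(L)$ denote the same framed link with the orientation forgotten. Then $$\sum_{L'\in OR(p(L))} (-1)^{\mathrm{com}(L')}a^{fr(L')} \;=\; (-1)^{\mathrm{com}(L)}\sum_{S\subset L} a^{-4\,\mathrm{lk}(S,L-S)},$$ where the right-hand sum runs over all sublinks $S$ of $L$ (unions of components, including $S=\emptyset$ and $S=L$), and $\mathrm{lk}(S,L-S)$ is the total linking number between $S$ and its complementary sublink $L-S$ (with orientations inherited from $L$).
   Context: For an unoriented framed link $P$, $OR(P)$ is the set of all oriented framed links obtained by choosing an orientation of each component of $P$ while keeping the framing. $\mathrm{com}(L')$ is the number of components. For an oriented framed link $L'$, $fr(L')$ is the number of right-hand full twists that must be removed from the framing of $L'$ to reach the $0$-framing (the framing induced by a Seifert surface of the oriented link $L'$); equivalently $fr(L')=\mathrm{lk}(L',L'')$ with $L''$ the push-off of $L'$ along its framing, oriented parallel to $L'$. The $0$-framing of the oriented link $L$ is the one with $fr(L)=0$. *)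

From HB Require Import structures.
From mathcomp Require Import all_boot all_order all_algebra.
Set Implicit Arguments. Unset Strict Implicit. Unset Printing Implicit Defensive.
Import Order.TTheory GRing.Theory Num.Theory.
Local Open Scope ring_scope.

(* An oriented framed link with n components K_0,...,K_{n-1} in S^3, recorded
   through the data on which all quantities of the statement depend:
   - lk i j  (i <> j) : the linking number lk(K_i, K_j) of the oriented components
                        (symmetric); the diagonal is irrelevant/unused;
   - framing i        : lk(K_i, K_i'') where K_i'' is the push-off of K_i along
                        its framing, oriented parallel to K_i. *)
Record FLink (n : nat) := FLinkMk {
  lk : 'I_n -> 'I_n -> int ;
  framing : 'I_n -> int ;
  lk_sym : forall i j, lk i j = lk j i }.

Definition com n (L : FLink n) : nat := n.

(* Reorienting: component i is reversed iff e i = true.  Linking numbers of two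
   distinct components change sign for each reversal; the framing of a component
   (the component and its parallel push-off are reversed together) is unchanged. *)
Definition reorient_lk n (L : FLink n) (e : {ffun 'I_n -> bool}) i j : int :=
  (-1) ^+ (e i + e j) * lk L i j.

Lemma reorient_lk_sym n (L : FLink n) e i j :
  reorient_lk L e i j = reorient_lk L e j i.
Proof. by rewrite /reorient_lk addnC lk_sym. Qed.

Definition reorient n (L : FLink n) (e : {ffun 'I_n -> bool}) : FLink n :=
  @FLinkMk n (reorient_lk L e) (framing L) (reorient_lk_sym L e).

(* OR(p(L)) : all oriented framed links obtained from the underlying unoriented
   framed link of L by choosing orientations of the components (one for each of
   the 2^n choices). *)
Definition OR n (L : FLink n) : seq (FLink n) :=
  [seq reorient L e | e <- enum {ffun 'I_n -> bool}].

(* fr(L) = lk(L, L''), L'' the push-off of L along its framing, oriented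
   parallel to L; by bilinearity this is the sum over pairs of components. *)
Definition fr n (L : FLink n) : int :=
  \sum_(i < n) \sum_(j < n) (if i == j then framing L i else lk L i j).

Definition lk_sub n (L : FLink n) (S : {set 'I_n}) : int :=
  \sum_(i in S) \sum_(j in ~: S) lk L i j.

(* Reversing the components in a set S changes the sign of lk(K_i, K_j) exactly
   when one of i, j lies in S, and leaves every framing unchanged.  Each such
   cross pair is counted twice in fr, as (i, j) and (j, i), so fr drops by
   4 lk(S, L - S).  Starting from the 0-framing, the orientations in OR(p(L))
   thus contribute exactly the terms a^(-4 lk(S, L - S)), indexed by the sets S
   of reversed components. *)
From HB Require Import structures.
From mathcomp Require Import all_boot all_order all_algebra.
Import Order.TTheory GRing.Theory Num.Theory.
Local Open Scope ring_scope.

Lemma sum_cross_pairs (T : finType) (V : zmodType) (f : T -> T -> V)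
    (S : {set T}) : (forall i j, f i j = f j i) ->
  \sum_i \sum_j (if (i \in S) != (j \in S) then f i j else 0) =
  (\sum_(i in S) \sum_(j in ~: S) f i j) *+ 2.
Proof.
move=> f_sym; rewrite mulr2n (bigID (mem S)) /=; congr (_ + _).
  apply: eq_bigr => i iS; rewrite [RHS]big_mkcond; apply: eq_bigr => j _.
  by rewrite iS in_setC; case: (j \in S).
rewrite exchange_big [RHS]big_mkcond /=; apply: eq_bigr => j _.
case: (boolP (j \in S)) => jS.
  apply: eq_big => [i|i iS]; first by rewrite in_setC.
  by rewrite (negbTE iS) f_sym.
by apply: big1 => i /negbTE ->.
Qed.

Lemma sum_ffun_bool_set (T : finType) (V : nmodType) (F : {set T} -> V) :
  \sum_(e : {ffun T -> bool}) F [set i | e i] = \sum_(S : {set T}) F S.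
Proof.
symmetry; apply: (reindex (fun e : {ffun T -> bool} => [set i | e i])).
exists (fun S : {set T} => [ffun i => i \in S]) => [e _|S _].
  by apply/ffunP => i; rewrite ffunE inE.
by apply/setP => i; rewrite inE ffunE.
Qed.

Section Reorientation.

Variables (n : nat) (L : FLink n).

Lemma reorient_lkE (e : {ffun 'I_n -> bool}) i j :
  reorient_lk L e i j = if e i == e j then lk L i j else - lk L i j.
Proof.
by rewrite /reorient_lk; case: (e i); case: (e j);
  rewrite /= ?expr0 ?expr1 ?sqrrN ?expr1n ?mul1r ?mulN1r.
Qed.

Lemma fr_reorient (e : {ffun 'I_n -> bool}) :
  fr (reorient L e) = fr L - 4 * lk_sub L [set i | e i].
Proof.
set S := [set i | e i].
suff drop : fr L - fr (reorient L e) = lk_sub L S *+ 4.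
  by rewrite mulr_natl -drop subKr.
have -> : lk_sub L S *+ 4 =
    (\sum_i \sum_j (if (i \in S) != (j \in S) then lk L i j else 0)) *+ 2.
  by rewrite sum_cross_pairs -?mulrnA //; apply: lk_sym.
rewrite /fr -sumrB -sumrMnl; apply: eq_bigr => i _; rewrite -sumrB -sumrMnl.
apply: eq_bigr => j _; rewrite /= reorient_lkE !inE.
case: eqP => [->|_]; first by rewrite eqxx subrr.
by case: (e i); case: (e j); rewrite /= ?subrr ?opprK // -mulr2n.
Qed.

End Reorientation.

Theorem lemma4 (R : fieldType) (a : R) (n : nat) (L : FLink n) :
  a != 0 -> fr L = 0 ->
  \sum_(L' <- OR L) (-1) ^+ (com L') * a ^ (fr L') =
  (-1) ^+ (com L) * \sum_(S : {set 'I_n}) a ^ (-4 * lk_sub L S).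
Proof.
(* The identity holds term by term. *)
move=> _ fr0.
rewrite /OR big_map big_enum /= mulr_sumr -sum_ffun_bool_set.
by apply: eq_bigr => e _; rewrite fr_reorient fr0 sub0r mulNr.
Qed.
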